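(* Let $\mathscr T$ be a functor satisfying (T1)–(T4), let $\mathfrak K_1,\mathfrak K_2$ be $\mathscr T$-based orthomodular dynamic algebras and $\phi\colon\mathfrak K_1\to\mathfrak K_2$ a bijective morphism of involutive generalized dynamic algebras. Then the restriction $\widetilde\phi$ of $\phi$ to $\widetilde{K_1}$ is an ortholattice isomorphism from $(\widetilde{K_1},\preceq_1,{}^{\perp_1})$ onto $(\widetilde{K_2},\preceq_2,{}^{\perp_2})$.
   Context: An involutive unital quantale is $(Q,\bigsqcup,\odot,{}^*,e)$: complete join-semilattice $Q$, associative $\odot$ distributing over arbitrary joins in each argument, unit $e$, ${}^*$ with $x^{**}=x$, $(x\odot y)^*=y^*\odot x^*$, $(\bigsqcup x_i)^*=\bigsqcup x_i^*$. An involutive generalized dynamic algebra (IDA) is such a quantale with ${\sim}\colon K\to K$ satisfying, for all $x,y$ and families $(x_i)$: ${\sim}(x\odot{\sim}{\sim}y)={\sim}(x\odot y)$; ${\sim}(\bigsqcup{\sim}{\sim}x_i)={\sim}(\bigsqcup x_i)$; $({\sim}x)^*={\sim}x$; ${\sim}{\sim}({\sim}{\sim}x\odot y)={\sim}({\sim}x\sqcup{\sim}({\sim}x\sqcup y))$. Test set $\widetilde K=\{{\sim}k\}$; $\bigvee W={\sim}{\sim}\bigsqcup W$; $w^\perp={\sim}w$; $k\preceq l$ iff $\bigvee\{k,l\}=l$; $k\bullet v={\sim}{\sim}(k\odot v)$; $k\equiv l$ iff $k\bullet w=l\bullet w$ for all $w\in\widetilde K$. IDA morphisms preserve arbitrary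 joins, $\odot$, ${}^*$, unit and ${\sim}$ (category $\mathbb{IDA}$); semi-Foulis means $(\widetilde K,\preceq,{}^\perp)$ is a complete orthomodular lattice. $\mathbb{IM}$: involutive monoids and homomorphisms. For a complete orthomodular lattice $\mathcal M$: $\pi_m(x)=m\wedge(m^\perp\vee x)$; $\mathbf{Lin}(\mathcal M)$ is the set of maps $f$ admitting $f^*$ with $f(x)\le y^\perp\iff x\le f^*(y)^\perp$, an IDA under pointwise joins, composition, ${}^*$, $\mathrm{id}$, ${\sim}f=\pi_{f(1)^\perp}$; for an involutive submonoid $L\supseteq\{\pi_m\}$, $\mathscr P(L)$ is the IDA of subsets of $L$ with union, setwise composition and involution, unit $\{\mathrm{id}\}$, ${\sim}A=\{\pi_{(\bigvee_{a\in A}a(1))^\perp}\}$. $\mathscr T\colon\mathbb{IDA}\to\mathbb{IM}$ satisfies: (T1) $\widetilde K\subseteq\mathscr T(K)\subseteq K$, $\mathscr T(K)$ an involutive submonoid; (T2) for semi-Foulis $\mathfrak K$ with $s=t\iff s\equiv t$ on $\mathscr T(K)$, $k\mapsto k\bullet(-)$ is an isomorphism $\mathscr T(\mathfrak K)\to\mathscr T(\mathbf{Lin}(\widetilde{\mathfrak K}))$; (T3) $f\mapsto\{f\}$ is an isomorphism $\mathscr T(\mathbf{Lin}(\mathcal M))\to\mathscr T(\mathscr P(\mathscr T(\mathbf{Lin}(\mathcal M))))$; (T4) $\mathscr T(f)$ is the restriction of $f$. A $\mathscr T$-based orthomodular dynamic algebra is an IDA with: (TODA1) $(\widetilde K,\preceq,{}^\perp)$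 a complete orthomodular lattice; (TODA2) every $A$ with $\mathscr T(K)\subseteq A\subseteq K$ closed under $\odot$, ${}^*$, arbitrary joins equals $K$; (TODA3) for $S,T\subseteq\mathscr T(K)$, $\bigsqcup S=\bigsqcup T$ iff $S=T$; (TODA4) for $s,t\in\mathscr T(K)$, $s=t$ iff $s\equiv t$. An ortholattice isomorphism is a bijection $g$ with $m\le n\iff g(m)\le g(n)$ and $g(m^\perp)=g(m)^\perp$. *)

From Stdlib Require Import ClassicalEpsilon.
Set Implicit Arguments.
Unset Strict Implicit.

Definition image {A B : Type} (f : A -> B) (S : A -> Prop) : B -> Prop :=
  fun y => exists x, S x /\ y = f x.
Definition pair2 {A : Type} (x y : A) : A -> Prop := fun z => z = x \/ z = y.
Definition subset {A : Type} (S D : A -> Prop) : Prop := forall x, S x -> D x.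

(* classical "smart constructor" into a subtype; the fallback [d] is only
   used when [x] is not in the subtype (never happens where it is used). *)
Definition mk_sub {A : Type} (P : A -> Prop) (x : A) (d : sig P) : sig P :=
  match excluded_middle_informative (P x) with
  | left p => exist P x p
  | right _ => d
  end.

(* The carrier is the subset [dom] of an ambient type [U]; operations  *)
(* are total on U, but only their behaviour on [dom] is constrained.   *)
Record ida_ops (U : Type) := IdaOps {
  dom : U -> Prop;
  sup : (U -> Prop) -> U;
  mul : U -> U -> U;
  inv : U -> U;
  one : U;
  neg : U -> U
}.

Section IDA.
Variables (U : Type) (K : ida_ops U).

Definition jle (x y : U) : Prop := sup K (pair2 x y) = y.

Definition is_ida : Prop :=
  dom K (one K) /\
  (forall S, subset S (dom K) -> dom K (sup K S)) /\
  (forall x y, dom K x -> dom K y -> dom K (mul K x y)) /\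
  (forall x, dom K x -> dom K (inv K x)) /\
  (forall x, dom K x -> dom K (neg K x)) /\
  (forall x, dom K x -> jle x x) /\
  (forall x y, dom K x -> dom K y -> jle x y -> jle y x -> x = y) /\
  (forall x y z, dom K x -> dom K y -> dom K z -> jle x y -> jle y z -> jle x z) /\
  (forall S, subset S (dom K) ->
     (forall s, S s -> jle s (sup K S)) /\
     (forall u, dom K u -> (forall s, S s -> jle s u) -> jle (sup K S) u)) /\
  (forall x y z, dom K x -> dom K y -> dom K z ->
     mul K x (mul K y z) = mul K (mul K x y) z) /\
  (forall x S, dom K x -> subset S (dom K) ->
     mul K x (sup K S) = sup K (image (mul K x) S)) /\
  (forall x S, dom K x -> subset S (dom K) ->
     mul K (sup K S) x = sup K (image (fun s => mul K s x) S)) /\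
  (forall x, dom K x -> mul K (one K) x = x /\ mul K x (one K) = x) /\
  (forall x, dom K x -> inv K (inv K x) = x) /\
  (forall x y, dom K x -> dom K y -> inv K (mul K x y) = mul K (inv K y) (inv K x)) /\
  (forall S, subset S (dom K) -> inv K (sup K S) = sup K (image (inv K) S)) /\
  (forall x y, dom K x -> dom K y ->
     neg K (mul K x (neg K (neg K y))) = neg K (mul K x y)) /\
  (forall S, subset S (dom K) ->
     neg K (sup K (image (fun x => neg K (neg K x)) S)) = neg K (sup K S)) /\
  (forall x, dom K x -> inv K (neg K x) = neg K x) /\
  (forall x y, dom K x -> dom K y ->
     neg K (neg K (mul K (neg K (neg K x)) y)) =
     neg K (sup K (pair2 (neg K x) (neg K (sup K (pair2 (neg K x) y)))))).

Definition is_test (k : U) : Prop := exists l, dom K l /\ k = neg K l.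
Definition vee (W : U -> Prop) : U := neg K (neg K (sup K W)).
Definition preceq (k l : U) : Prop := vee (pair2 k l) = l.
Definition bullet (k v : U) : U := neg K (neg K (mul K k v)).
Definition equivK (k l : U) : Prop :=
  forall w, is_test w -> bullet k w = bullet l w.

Definition test_type : Type := sig is_test.
Definition test_le (a b : test_type) : Prop := preceq (proj1_sig a) (proj1_sig b).
Definition test_perp (a : test_type) : test_type :=
  @mk_sub U is_test (neg K (proj1_sig a)) a.

End IDA.

Definition is_morph (U1 U2 : Type) (K1 : ida_ops U1) (K2 : ida_ops U2)
  (f : U1 -> U2) : Prop :=
  (forall x, dom K1 x -> dom K2 (f x)) /\
  (forall S, subset S (dom K1) -> f (sup K1 S) = sup K2 (image f S)) /\
  (forall x y, dom K1 x -> dom K1 y -> f (mul K1 x y) = mul K2 (f x) (f y)) /\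
  (forall x, dom K1 x -> f (inv K1 x) = inv K2 (f x)) /\
  f (one K1) = one K2 /\
  (forall x, dom K1 x -> f (neg K1 x) = neg K2 (f x)).

Definition bijective_on (U1 U2 : Type) (D1 : U1 -> Prop) (D2 : U2 -> Prop)
  (f : U1 -> U2) : Prop :=
  (forall x, D1 x -> D2 (f x)) /\
  (forall x y, D1 x -> D1 y -> f x = f y -> x = y) /\
  (forall y, D2 y -> exists x, D1 x /\ f x = y).

Section OML.
Variables (M : Type) (le : M -> M -> Prop) (perp : M -> M).

Definition is_lub (S : M -> Prop) (s : M) : Prop :=
  (forall x, S x -> le x s) /\ (forall u, (forall x, S x -> le x u) -> le s u).
Definition is_glb (S : M -> Prop) (s : M) : Prop :=
  (forall x, S x -> le s x) /\ (forall u, (forall x, S x -> le u x) -> le u s).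

Definition is_cOML : Prop :=
  (forall x, le x x) /\
  (forall x y, le x y -> le y x -> x = y) /\
  (forall x y z, le x y -> le y z -> le x z) /\
  (forall S, exists s, is_lub S s) /\
  (forall x y, le x y -> le (perp y) (perp x)) /\
  (forall x, perp (perp x) = x) /\
  (forall x s, is_lub (pair2 x (perp x)) s -> forall z, le z s) /\
  (forall x m, is_glb (pair2 x (perp x)) m -> forall z, le m z) /\
  (forall x y m, le x y -> is_glb (pair2 y (perp x)) m -> is_lub (pair2 x m) y).

(* lattice operations (chosen by classical choice; [x] only witnesses
   inhabitation, the result does not depend on it) *)
Definition msup (S : M -> Prop) (x : M) : M := epsilon (inhabits x) (is_lub S).
Definition mtop (x : M) : M := msup (fun _ => True) x.
Definition mjoin (a b : M) : M := msup (pair2 a b) a.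
Definition mmeet (a b : M) : M := epsilon (inhabits a) (is_glb (pair2 a b)).
Definition sasaki (m x : M) : M := mmeet m (mjoin (perp m) x).

Definition adjoint (f g : M -> M) : Prop :=
  forall x y, le (f x) (perp y) <-> le x (perp (g y)).

Definition Lin_ops : ida_ops (M -> M) := {|
  dom := fun f => exists g, adjoint f g;
  sup := fun F => fun x => msup (image (fun f : M -> M => f x) F) x;
  mul := fun f g => fun x => f (g x);
  inv := fun f => epsilon (inhabits f) (adjoint f);
  one := fun x => x;
  neg := fun f => fun x => sasaki (perp (f (mtop x))) x
|}.

Definition P_ops (L : (M -> M) -> Prop) : ida_ops ((M -> M) -> Prop) := {|
  dom := fun A => subset A L;
  sup := fun F => fun f => exists A, F A /\ A f;
  mul := fun A B => fun h => exists f g, A f /\ B g /\ h = (fun x => f (g x));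
  inv := fun A => image (inv Lin_ops) A;
  one := fun h => h = (fun x => x);
  neg := fun A => fun h =>
    h = (fun x => sasaki (perp (msup (image (fun a : M -> M => a (mtop x)) A) x)) x)
|}.

End OML.

(* The functor T : IDA -> IM, given by its object part (a sub-carrier); *)
(* by (T4) its morphism part is restriction.                           *)
Definition T_fun : Type := forall U : Type, ida_ops U -> U -> Prop.

Definition semi_foulis (U : Type) (K : ida_ops U) : Prop :=
  is_cOML (@test_le U K) (@test_perp U K).

Definition IM_iso (U1 U2 : Type) (K1 : ida_ops U1) (K2 : ida_ops U2)
  (T1 : U1 -> Prop) (T2 : U2 -> Prop) (h : U1 -> U2) : Prop :=
  bijective_on T1 T2 h /\
  (forall x y, T1 x -> T1 y -> h (mul K1 x y) = mul K2 (h x) (h y)) /\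
  (forall x, T1 x -> h (inv K1 x) = inv K2 (h x)) /\
  h (one K1) = one K2.

Definition bullet_map (U : Type) (K : ida_ops U) (k : U) :
  test_type K -> test_type K :=
  fun w => @mk_sub U (is_test K) (bullet K k (proj1_sig w)) w.

Definition T_axioms (T : T_fun) : Prop :=
  (forall (U : Type) (K : ida_ops U), is_ida K ->
     (forall k, is_test K k -> T U K k) /\
     (forall k, T U K k -> dom K k) /\
     T U K (one K) /\
     (forall x y, T U K x -> T U K y -> T U K (mul K x y)) /\
     (forall x, T U K x -> T U K (inv K x))) /\
  (* (T4) + functoriality: T(f) is the restriction of f, mapping T(K1) to T(K2) *)
  (forall (U1 U2 : Type) (K1 : ida_ops U1) (K2 : ida_ops U2) (f : U1 -> U2),
     is_ida K1 -> is_ida K2 -> is_morph K1 K2 f ->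
     forall k, T U1 K1 k -> T U2 K2 (f k)) /\
  (forall (U : Type) (K : ida_ops U), is_ida K -> semi_foulis K ->
     (forall s t, T U K s -> T U K t -> (s = t <-> equivK K s t)) ->
     IM_iso K (Lin_ops (@test_le U K) (@test_perp U K))
       (T U K) (T _ (Lin_ops (@test_le U K) (@test_perp U K)))
       (@bullet_map U K)) /\
  (forall (M : Type) (le : M -> M -> Prop) (perp : M -> M), is_cOML le perp ->
     IM_iso (Lin_ops le perp) (P_ops le perp (T _ (Lin_ops le perp)))
       (T _ (Lin_ops le perp))
       (T _ (P_ops le perp (T _ (Lin_ops le perp))))
       (fun f => fun g => g = f)).

Definition is_TODA (T : T_fun) (U : Type) (K : ida_ops U) : Prop :=
  is_ida K /\
  semi_foulis K /\
  (forall A : U -> Prop,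
     subset (T U K) A -> subset A (dom K) ->
     (forall x y, A x -> A y -> A (mul K x y)) ->
     (forall x, A x -> A (inv K x)) ->
     (forall S, subset S A -> A (sup K S)) ->
     forall k, dom K k -> A k) /\
  (forall S S' : U -> Prop, subset S (T U K) -> subset S' (T U K) ->
     (sup K S = sup K S' <-> forall k, S k <-> S' k)) /\
  (forall s t, T U K s -> T U K t -> (s = t <-> equivK K s t)).

(* ortholattice isomorphism between the test ortholattices, for a map
   defined on the ambient types (we speak about its restriction) *)
Definition ortholattice_iso (U1 U2 : Type) (K1 : ida_ops U1) (K2 : ida_ops U2)
  (g : U1 -> U2) : Prop :=
  bijective_on (is_test K1) (is_test K2) g /\
  (forall m n, is_test K1 m -> is_test K1 n ->
     (preceq K1 m n <-> preceq K2 (g m) (g n))) /\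
  (forall m, is_test K1 m -> g (neg K1 m) = neg K2 (g m)).

From Stdlib Require Import FunctionalExtensionality PropExtensionality.

Set Implicit Arguments.

(* A bijective IDA morphism maps tests onto tests because it commutes with
   [~], and the test order [k ⪯ l] is the equation [~~(k ⊔ l) = l], which the
   morphism transports forwards and, by injectivity, backwards. *)

Lemma image_pair2 (A B : Type) (f : A -> B) (x y : A) :
  image f (pair2 x y) = pair2 (f x) (f y).
Proof.
  apply functional_extensionality; intro z; apply propositional_extensionality.
  unfold image, pair2; split.
  - intros [w [[-> | ->] ->]]; auto.
  - intros [-> | ->]; eauto.
Qed.

Lemma pair2_subset (A : Type) (D : A -> Prop) (x y : A) :
  D x -> D y -> subset (pair2 x y) D.
Proof. intros Dx Dy z [-> | ->]; assumption. Qed.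

Section IdaClosure.
Variables (U : Type) (K : ida_ops U).
Hypothesis K_ida : is_ida K.

Lemma ida_dom_sup S : subset S (dom K) -> dom K (sup K S).
Proof. destruct K_ida as [_ [dom_sup _]]; auto. Qed.

Lemma ida_dom_neg x : dom K x -> dom K (neg K x).
Proof. destruct K_ida as [_ [_ [_ [_ [dom_neg _]]]]]; auto. Qed.

Lemma ida_dom_test m : is_test K m -> dom K m.
Proof. intros [l [Dl ->]]; apply ida_dom_neg; assumption. Qed.

End IdaClosure.

Section MorphismOnTests.
Variables (U1 U2 : Type) (K1 : ida_ops U1) (K2 : ida_ops U2) (phi : U1 -> U2).
Hypothesis phi_morph : is_morph K1 K2 phi.

Lemma morph_dom x : dom K1 x -> dom K2 (phi x).
Proof. destruct phi_morph as [Hdom _]; auto. Qed.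

Lemma morph_sup S : subset S (dom K1) -> phi (sup K1 S) = sup K2 (image phi S).
Proof. destruct phi_morph as [_ [Hsup _]]; auto. Qed.

Lemma morph_neg x : dom K1 x -> phi (neg K1 x) = neg K2 (phi x).
Proof. destruct phi_morph as [_ [_ [_ [_ [_ Hneg]]]]]; auto. Qed.

Lemma morph_test m : is_test K1 m -> is_test K2 (phi m).
Proof.
  intros [l [Dl ->]]; exists (phi l); split.
  - apply morph_dom; assumption.
  - apply morph_neg; assumption.
Qed.

Lemma morph_test_surjective :
  (forall y, dom K2 y -> exists x, dom K1 x /\ phi x = y) ->
  forall y, is_test K2 y -> exists x, is_test K1 x /\ phi x = y.
Proof.
  intros phi_onto y [l2 [Dl2 ->]].
  destruct (phi_onto l2 Dl2) as [l1 [Dl1 <-]].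
  exists (neg K1 l1); split.
  - exists l1; split; [assumption | reflexivity].
  - apply morph_neg; assumption.
Qed.

Hypothesis K1_ida : is_ida K1.

Lemma morph_vee_pair2 m n : dom K1 m -> dom K1 n ->
  phi (vee K1 (pair2 m n)) = vee K2 (pair2 (phi m) (phi n)).
Proof.
  intros Dm Dn; unfold vee.
  rewrite morph_neg, morph_neg, morph_sup, image_pair2;
    auto using pair2_subset, ida_dom_sup, ida_dom_neg.
Qed.

Lemma morph_preceq :
  (forall x y, dom K1 x -> dom K1 y -> phi x = phi y -> x = y) ->
  forall m n, dom K1 m -> dom K1 n -> preceq K1 m n <-> preceq K2 (phi m) (phi n).
Proof.
  intros phi_inj m n Dm Dn; unfold preceq; rewrite <- morph_vee_pair2 by assumption.
  split.
  - intros ->; reflexivity.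
  - apply phi_inj; [unfold vee | assumption].
    auto using pair2_subset, ida_dom_sup, ida_dom_neg.
Qed.

End MorphismOnTests.

Theorem lemma4p7 (T : T_fun) (HT : T_axioms T)
  (U1 : Type) (K1 : ida_ops U1) (U2 : Type) (K2 : ida_ops U2)
  (H1 : is_TODA T K1) (H2 : is_TODA T K2)
  (phi : U1 -> U2) (Hmorph : is_morph K1 K2 phi)
  (Hbij : bijective_on (dom K1) (dom K2) phi) :
  ortholattice_iso K1 K2 phi.
Proof.
  destruct H1 as [K1_ida _].
  destruct Hbij as [_ [phi_inj phi_onto]].
  split; [split; [| split] | split].
  - intros m Tm; apply (morph_test Hmorph Tm).
  - intros m n Tm Tn; apply phi_inj; apply (ida_dom_test K1_ida); assumption.
  - apply (morph_test_surjective Hmorph phi_onto).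
  - intros m n Tm Tn.
    apply (morph_preceq Hmorph K1_ida phi_inj); apply (ida_dom_test K1_ida); assumption.
  - intros m Tm; apply (morph_neg Hmorph), (ida_dom_test K1_ida Tm).
Qed.
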